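(* The variety $\mathsf{V}(S_{(4,414)})$ is the ai-semiring variety defined by the identities $xy\approx yx$, $x_1x_2x_3\approx x_1x_2x_3+x_4$, $x_1x_2+x_3x_4\approx x_1x_2+x_3x_4+x_1x_4$.
   Context: An ai-semiring is an algebra $(S,+,\cdot)$ with $(S,+)$ a semilattice, $(S,\cdot)$ a semigroup, and both distributive laws. $\mathsf{V}(S)$ is the variety generated by $S$; ''the ai-semiring variety defined by identities $\Sigma$'' is the class of all ai-semirings satisfying $\Sigma$. $S_{(4,414)}$ has carrier $\{1,2,3,4\}$; addition: $x+x=x$, $2+x=x$, $1+x=1$ for all $x$, $3+4=1$; multiplication (row $a$, column $b$ gives $a\cdot b$): row $1$: $1,1,1,1$; row $2$: $1,3,1,3$; row $3$: $1,1,1,1$; row $4$: $1,3,1,3$. *)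

Inductive term : Type :=
| Var : nat -> term
| Add : term -> term -> term
| Mul : term -> term -> term.

Record aiSemiring : Type := AiSemiring {
  car : Type;
  sadd : car -> car -> car;
  smul : car -> car -> car;
  sadd_assoc : forall x y z, sadd x (sadd y z) = sadd (sadd x y) z;
  sadd_comm : forall x y, sadd x y = sadd y x;
  sadd_idem : forall x, sadd x x = x;
  smul_assoc : forall x y z, smul x (smul y z) = smul (smul x y) z;
  smul_distl : forall x y z, smul x (sadd y z) = sadd (smul x y) (smul x z);
  smul_distr : forall x y z, smul (sadd x y) z = sadd (smul x z) (smul y z)
}.

Fixpoint eval (A : aiSemiring) (v : nat -> car A) (t : term) : car A :=
  match t with
  | Var n => v n
  | Add s u => sadd A (eval A v s) (eval A v u)
  | Mul s u => smul A (eval A v s) (eval A v u)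
  end.

Definition satisfies (A : aiSemiring) (s t : term) : Prop :=
  forall v : nat -> car A, eval A v s = eval A v t.

Inductive E4 : Type := e1 | e2 | e3 | e4.

Definition add4 (x y : E4) : E4 :=
  match x, y with
  | e1, _ => e1
  | _, e1 => e1
  | e2, z => z
  | z, e2 => z
  | e3, e3 => e3
  | e4, e4 => e4
  | e3, e4 => e1
  | e4, e3 => e1
  end.

Definition mul4 (x y : E4) : E4 :=
  match x, y with
  | e2, e2 => e3
  | e2, e4 => e3
  | e4, e2 => e3
  | e4, e4 => e3
  | _, _ => e1
  end.

Definition S4_414 : aiSemiring.
Proof.
  refine (@AiSemiring E4 add4 mul4 _ _ _ _ _ _);
  intros; repeat match goal with x : E4 |- _ => destruct x; clear x end; reflexivity.
Defined.

(* Membership in the variety V(S) generated by S: A satisfies every identity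
   satisfied by S (equivalently, by Birkhoff's HSP theorem, A ∈ HSP(S)). *)
Definition in_variety_gen (S A : aiSemiring) : Prop :=
  forall s t : term, satisfies S s t -> satisfies A s t.

Definition x (n : nat) : term := Var n.

Definition satisfies_Sigma (A : aiSemiring) : Prop :=
  satisfies A (Mul (x 0) (x 1)) (Mul (x 1) (x 0)) /\
  satisfies A (Mul (Mul (x 1) (x 2)) (x 3))
              (Add (Mul (Mul (x 1) (x 2)) (x 3)) (x 4)) /\
  satisfies A (Add (Mul (x 1) (x 2)) (Mul (x 3) (x 4)))
              (Add (Add (Mul (x 1) (x 2)) (Mul (x 3) (x 4))) (Mul (x 1) (x 4))).

From Stdlib Require Import Bool Arith.

(* Modulo Sigma, a product of three or more factors is the top element, so
   every term containing one is equal to every other such term.  A term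
   without one is a sum of variables plus products of sums of variables; by
   commutativity and xy + zw >= xw it equals the sum of the variables x in L
   and the products xy with x, y in Q, where L is the set of variables
   occurring as summands and Q the set of variables occurring in products.
   So a term is determined modulo Sigma by this profile.  In S_(4,414),
   sending every variable to 2 except one variable z, sent to 3 or 4, reads
   off whether z lies in Q or in L, so every identity of S_(4,414) relates
   terms of equal profile and follows from Sigma.  Conversely S_(4,414)
   satisfies Sigma by a finite check. *)

Fixpoint is_linear (t : term) : bool :=
  match t with
  | Var _ => true
  | Add a b => is_linear a && is_linear b
  | Mul _ _ => false
  end.

Fixpoint has_long_product (t : term) : bool :=
  match t with
  | Var _ => false
  | Add a b => has_long_product a || has_long_product b
  | Mul a b => negb (is_linear a && is_linear b)
  end.

Fixpoint occurs_linearly (t : term) (n : nat) : bool :=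
  match t with
  | Var m => Nat.eqb m n
  | Add a b => occurs_linearly a n || occurs_linearly b n
  | Mul _ _ => false
  end.

Fixpoint occurs_quadratically (t : term) (n : nat) : bool :=
  match t with
  | Var _ => false
  | Add a b => occurs_quadratically a n || occurs_quadratically b n
  | Mul a b => occurs_linearly a n || occurs_linearly b n
  end.

Definition same_profile (s t : term) : Prop :=
  has_long_product s = has_long_product t /\
  (has_long_product s = false -> forall n,
     occurs_linearly s n = occurs_linearly t n /\
     occurs_quadratically s n = occurs_quadratically t n).

Section SemilatticeOrder.

Variable A : aiSemiring.

Definition le (a b : car A) : Prop := sadd A a b = b.

Lemma le_refl a : le a a.
Proof. apply sadd_idem. Qed.

Lemma le_trans a b c : le a b -> le b c -> le a c.
Proof. unfold le; intros Hab Hbc. rewrite <- Hbc, sadd_assoc, Hab. reflexivity. Qed.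

Lemma le_antisym a b : le a b -> le b a -> a = b.
Proof. unfold le; intros Hab Hba. rewrite <- Hab, sadd_comm. symmetry. exact Hba. Qed.

Lemma le_add_l a b : le a (sadd A a b).
Proof. unfold le. rewrite sadd_assoc, sadd_idem. reflexivity. Qed.

Lemma le_add_r a b : le b (sadd A a b).
Proof. rewrite sadd_comm. apply le_add_l. Qed.

Lemma add_le a b c : le a c -> le b c -> le (sadd A a b) c.
Proof. unfold le; intros Hac Hbc. rewrite <- sadd_assoc, Hbc, Hac. reflexivity. Qed.

Lemma le_mul_l a b c : le a b -> le (smul A c a) (smul A c b).
Proof. unfold le; intros Hab. rewrite <- smul_distl, Hab. reflexivity. Qed.

Lemma le_mul_r a b c : le a b -> le (smul A a c) (smul A b c).
Proof. unfold le; intros Hab. rewrite <- smul_distr, Hab. reflexivity. Qed.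

Lemma le_add_trans_l a b c : le a b -> le a (sadd A b c).
Proof. intros Hab. exact (le_trans _ _ _ Hab (le_add_l b c)). Qed.

Lemma le_add_trans_r a b c : le a c -> le a (sadd A b c).
Proof. intros Hac. exact (le_trans _ _ _ Hac (le_add_r b c)). Qed.

Variable v : nat -> car A.

Lemma var_le_eval t n : occurs_linearly t n = true -> le (v n) (eval A v t).
Proof.
  induction t as [m | t1 IH1 t2 IH2 | t1 _ t2 _]; simpl; intros Hn.
  - apply Nat.eqb_eq in Hn; subst. apply le_refl.
  - apply orb_true_iff in Hn as [Hn | Hn].
    + apply le_add_trans_l, IH1, Hn.
    + apply le_add_trans_r, IH2, Hn.
  - discriminate.
Qed.

Lemma product_le_eval t :
  is_linear t = false -> exists p q, le (smul A p q) (eval A v t).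
Proof.
  induction t as [m | t1 IH1 t2 IH2 | t1 _ t2 _]; simpl; intros Hlin.
  - discriminate.
  - apply andb_false_iff in Hlin as [Hlin | Hlin].
    + destruct (IH1 Hlin) as (p & q & Hpq). exists p, q. apply le_add_trans_l, Hpq.
    + destruct (IH2 Hlin) as (p & q & Hpq). exists p, q. apply le_add_trans_r, Hpq.
  - exists (eval A v t1), (eval A v t2). apply le_refl.
Qed.

Lemma additive_image_le_of_linear (f : car A -> car A)
    (f_add : forall a b, f (sadd A a b) = sadd A (f a) (f b)) s c :
  is_linear s = true ->
  (forall n, occurs_linearly s n = true -> le (f (v n)) c) ->
  le (f (eval A v s)) c.
Proof.
  induction s as [m | s1 IH1 s2 IH2 | s1 _ s2 _]; simpl; intros Hlin Hvars.
  - apply Hvars, Nat.eqb_refl.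
  - apply andb_true_iff in Hlin as [Hlin1 Hlin2].
    rewrite f_add. apply add_le.
    + apply IH1; [exact Hlin1 |]. intros n Hn. apply Hvars. rewrite Hn. reflexivity.
    + apply IH2; [exact Hlin2 |]. intros n Hn. apply Hvars. rewrite Hn, orb_true_r. reflexivity.
  - discriminate.
Qed.

End SemilatticeOrder.

Section SigmaConsequences.

Variable A : aiSemiring.

Hypothesis mul_comm : forall p q, smul A p q = smul A q p.
Hypothesis cube_top : forall p q r z, le A z (smul A (smul A p q) r).
Hypothesis cross_le :
  forall a b c d, le A (smul A a d) (sadd A (smul A a b) (smul A c d)).

Variable v : nat -> car A.

Lemma long_product_top t z : has_long_product t = true -> le A z (eval A v t).
Proof.
  induction t as [m | t1 IH1 t2 IH2 | t1 _ t2 _]; simpl; intros Hlong.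
  - discriminate.
  - apply orb_true_iff in Hlong as [Hlong | Hlong].
    + apply le_add_trans_l, IH1, Hlong.
    + apply le_add_trans_r, IH2, Hlong.
  - apply negb_true_iff, andb_false_iff in Hlong as [Hlin | Hlin].
    + destruct (product_le_eval A v t1 Hlin) as (p & q & Hpq).
      apply (le_trans _ _ _ _ (cube_top p q (eval A v t2) z)), le_mul_r, Hpq.
    + destruct (product_le_eval A v t2 Hlin) as (p & q & Hpq).
      apply (le_trans _ _ _ _ (cube_top (eval A v t1) p q z)).
      rewrite <- smul_assoc. apply le_mul_l, Hpq.
Qed.

Lemma quadratic_var_factor t n :
  occurs_quadratically t n = true -> exists a, le A (smul A (v n) a) (eval A v t).
Proof.
  induction t as [m | t1 IH1 t2 IH2 | t1 _ t2 _]; simpl; intros Hn.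
  - discriminate.
  - apply orb_true_iff in Hn as [Hn | Hn].
    + destruct (IH1 Hn) as [a Ha]. exists a. apply le_add_trans_l, Ha.
    + destruct (IH2 Hn) as [a Ha]. exists a. apply le_add_trans_r, Ha.
  - apply orb_true_iff in Hn as [Hn | Hn].
    + exists (eval A v t2). apply le_mul_r, var_le_eval, Hn.
    + exists (eval A v t1). rewrite mul_comm. apply le_mul_l, var_le_eval, Hn.
Qed.

Lemma quadratic_vars_product_le t m n :
  occurs_quadratically t m = true -> occurs_quadratically t n = true ->
  le A (smul A (v m) (v n)) (eval A v t).
Proof.
  intros Hm Hn.
  destruct (quadratic_var_factor t m Hm) as [a Ha].
  destruct (quadratic_var_factor t n Hn) as [b Hb].
  apply (le_trans _ _ _ _ (cross_le (v m) a b (v n))).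
  apply add_le; [exact Ha |]. rewrite mul_comm. exact Hb.
Qed.

Lemma linear_product_le t s1 s2 :
  is_linear s1 = true -> is_linear s2 = true ->
  (forall n, occurs_linearly s1 n = true -> occurs_quadratically t n = true) ->
  (forall n, occurs_linearly s2 n = true -> occurs_quadratically t n = true) ->
  le A (smul A (eval A v s1) (eval A v s2)) (eval A v t).
Proof.
  intros Hlin1 Hlin2 Hvars1 Hvars2.
  apply (additive_image_le_of_linear A v (fun a => smul A a (eval A v s2)));
    [intros; apply smul_distr | exact Hlin1 |].
  intros m Hm.
  apply (additive_image_le_of_linear A v (smul A (v m)));
    [intros; apply smul_distl | exact Hlin2 |].
  intros n Hn. apply quadratic_vars_product_le; auto.
Qed.

Lemma eval_le_of_occurrences s t :
  has_long_product s = false ->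
  (forall n, occurs_linearly s n = true -> occurs_linearly t n = true) ->
  (forall n, occurs_quadratically s n = true -> occurs_quadratically t n = true) ->
  le A (eval A v s) (eval A v t).
Proof.
  induction s as [m | s1 IH1 s2 IH2 | s1 _ s2 _]; simpl; intros Hlong HL HQ.
  - apply var_le_eval, HL, Nat.eqb_refl.
  - apply orb_false_iff in Hlong as [Hlong1 Hlong2].
    apply add_le.
    + apply IH1; auto; intros n Hn; [apply HL | apply HQ]; rewrite Hn; reflexivity.
    + apply IH2; auto; intros n Hn; [apply HL | apply HQ];
        rewrite Hn, orb_true_r; reflexivity.
  - apply negb_false_iff, andb_true_iff in Hlong as [Hlin1 Hlin2].
    apply linear_product_le; auto; intros n Hn; apply HQ;
      rewrite Hn; [reflexivity | apply orb_true_r].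
Qed.

Lemma eval_eq_of_same_profile s t : same_profile s t -> eval A v s = eval A v t.
Proof.
  intros [Hlong Hvars].
  destruct (has_long_product s) eqn:Hs.
  - apply le_antisym; apply long_product_top; congruence.
  - apply le_antisym; apply eval_le_of_occurrences; try congruence;
      intros n; destruct (Hvars eq_refl n) as [HL HQ]; congruence.
Qed.

End SigmaConsequences.

Lemma Sigma_mul_comm A :
  satisfies_Sigma A -> forall p q, smul A p q = smul A q p.
Proof.
  intros (H & _ & _) p q. exact (H (fun n => match n with 0 => p | _ => q end)).
Qed.

Lemma Sigma_cube_top A :
  satisfies_Sigma A -> forall p q r z, le A z (smul A (smul A p q) r).
Proof.
  intros (_ & H & _) p q r z. unfold le. rewrite sadd_comm. symmetry.
  exact (H (fun n => match n with 1 => p | 2 => q | 3 => r | _ => z end)).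
Qed.

Lemma Sigma_cross_le A :
  satisfies_Sigma A ->
  forall a b c d, le A (smul A a d) (sadd A (smul A a b) (smul A c d)).
Proof.
  intros (_ & _ & H) a b c d. unfold le. rewrite sadd_comm. symmetry.
  exact (H (fun n => match n with 1 => a | 2 => b | 3 => c | _ => d end)).
Qed.

Lemma S4_414_satisfies_Sigma : satisfies_Sigma S4_414.
Proof.
  repeat split; intros v; simpl;
    destruct (v 0), (v 1), (v 2), (v 3), (v 4); reflexivity.
Qed.

Definition point (a : E4) (z n : nat) : E4 := if Nat.eqb n z then a else e2.

Definition point_value (a : E4) (long lin in_lin in_quad : bool) : E4 :=
  if long then e1
  else add4 (if in_lin then a else e2)
            (if in_quad then mul4 a a else if lin then e2 else e3).

Ltac destruct_ifs H :=
  repeat match type of H with context [if ?b then _ else _] => destruct b end.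

Lemma eval_point_linear a z t :
  is_linear t = true ->
  eval S4_414 (point a z) t = if occurs_linearly t z then a else e2.
Proof.
  induction t as [m | t1 IH1 t2 IH2 | t1 _ t2 _]; simpl; intros Hlin.
  - unfold point. rewrite Nat.eqb_sym. reflexivity.
  - apply andb_true_iff in Hlin as [Hlin1 Hlin2].
    rewrite IH1, IH2 by assumption.
    destruct (occurs_linearly t1 z), (occurs_linearly t2 z), a; reflexivity.
  - discriminate.
Qed.

Lemma eval_point a z t :
  eval S4_414 (point a z) t =
  point_value a (has_long_product t) (is_linear t)
              (occurs_linearly t z) (occurs_quadratically t z).
Proof.
  induction t as [m | t1 IH1 t2 IH2 | t1 IH1 t2 IH2]; simpl.
  - unfold point, point_value. rewrite Nat.eqb_sym.
    destruct (Nat.eqb z m), a; reflexivity.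
  - rewrite IH1, IH2. unfold point_value.
    destruct (has_long_product t1), (has_long_product t2), (is_linear t1),
      (is_linear t2), (occurs_linearly t1 z), (occurs_linearly t2 z),
      (occurs_quadratically t1 z), (occurs_quadratically t2 z), a; reflexivity.
  - unfold point_value.
    destruct (is_linear t1) eqn:Hlin1; [destruct (is_linear t2) eqn:Hlin2 |]; simpl.
    + rewrite !eval_point_linear by assumption.
      destruct (occurs_linearly t1 z), (occurs_linearly t2 z), a; reflexivity.
    + rewrite IH2. unfold point_value.
      destruct (eval S4_414 (point a z) t1), (has_long_product t2),
        (occurs_linearly t2 z), (occurs_quadratically t2 z), a; reflexivity.
    + rewrite IH1. unfold point_value.
      destruct (eval S4_414 (point a z) t2), (has_long_product t1),
        (occurs_linearly t1 z), (occurs_quadratically t1 z), a; reflexivity.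
Qed.

Lemma S4_414_identity_same_profile s t :
  satisfies S4_414 s t -> same_profile s t.
Proof.
  intros HS.
  assert (Hlong : has_long_product s = has_long_product t).
  { pose proof (HS (point e2 0)) as E. rewrite !eval_point in E.
    unfold point_value in E. destruct_ifs E; cbn in E; congruence. }
  split; [exact Hlong |]. intros Hs n.
  pose proof (HS (point e4 n)) as E4. pose proof (HS (point e3 n)) as E3.
  rewrite !eval_point, <- Hlong, Hs in E4, E3. unfold point_value in E4, E3.
  destruct_ifs E4; destruct_ifs E3; cbn in E4, E3; split; congruence.
Qed.

Theorem proposition5p5 :
  forall A : aiSemiring, in_variety_gen S4_414 A <-> satisfies_Sigma A.
Proof.
  intros A; split.
  - intros HA. destruct S4_414_satisfies_Sigma as (H1 & H2 & H3).
    repeat split; apply HA; assumption.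
  - intros HSigma s t HS v.
    apply eval_eq_of_same_profile.
    + apply Sigma_mul_comm, HSigma.
    + apply Sigma_cube_top, HSigma.
    + apply Sigma_cross_le, HSigma.
    + apply S4_414_identity_same_profile, HS.
Qed.
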